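(* Let $Z$ and $W$ be random variables with $P(Z>u)>0$ and $P(W>u)>0$ for all $u>0$, and let $Y$ be a random variable independent of $Z$ and of $W$ satisfying condition $(\mathrm{P})$. If $\lim_{u\to\infty}P(Z>u)/P(W>u)=1$, then $\lim_{u\to\infty}P(Y+Z>u)/P(Y+W>u)=1$; if $\lim_{u\to\infty}P(Z>u)/P(W>u)=0$, then $\lim_{u\to\infty}P(Y+Z>u)/P(Y+W>u)=0$.
   Context: A random variable $Y$ satisfies condition $(\mathrm{P})$ if $P(Y>u)>0$ for all $u>0$ and there is a constant $a>0$ with $\lim_{u\to\infty}P(Y>u+a)/P(Y>u)=0$. *)

From Stdlib Require Import Reals Lra.
Open Scope R_scope.
Set Implicit Arguments.

Definition is_sigma_algebra (T : Type) (S : (T -> Prop) -> Prop) : Prop :=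
  S (fun _ => True) /\
  (forall A, S A -> S (fun x => ~ A x)) /\
  (forall A : nat -> (T -> Prop), (forall n, S (A n)) -> S (fun x => exists n, A n x)).

Definition borel (B : R -> Prop) : Prop :=
  forall S : (R -> Prop) -> Prop, is_sigma_algebra S ->
    (forall a b, S (fun x => a < x < b)) -> S B.

Record prob_space := {
  Omega : Type;
  event : (Omega -> Prop) -> Prop;
  event_sigma : is_sigma_algebra event;
  Pr : (Omega -> Prop) -> R;
  Pr_nonneg : forall A, event A -> 0 <= Pr A;
  Pr_full : Pr (fun _ => True) = 1;
  Pr_sigma_additive : forall A : nat -> (Omega -> Prop),
    (forall n, event (A n)) ->
    (forall m n, m <> n -> forall w, A m w -> A n w -> False) ->
    infinite_sum (fun n => Pr (A n)) (Pr (fun w => exists n, A n w))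
}.

Definition random_variable {Ps : prob_space} (X : Omega Ps -> R) : Prop :=
  forall B, borel B -> event Ps (fun w => B (X w)).

Definition independent {Ps : prob_space} (X Y : Omega Ps -> R) : Prop :=
  forall A B, borel A -> borel B ->
    Pr Ps (fun w => A (X w) /\ B (Y w)) =
    Pr Ps (fun w => A (X w)) * Pr Ps (fun w => B (Y w)).

Definition tail {Ps : prob_space} (X : Omega Ps -> R) (u : R) : R :=
  Pr Ps (fun w => X w > u).

Definition lim_infty (f : R -> R) (L : R) : Prop :=
  forall eps, eps > 0 -> exists M, forall u, u >= M -> Rabs (f u - L) < eps.

Definition condP {Ps : prob_space} (Y : Omega Ps -> R) : Prop :=
  (forall u, u > 0 -> tail Y u > 0) /\
  exists a, a > 0 /\ lim_infty (fun u => tail Y (u + a) / tail Y u) 0.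

(* Idea.  Discretising Y on finer and finer grids and using independence cell
   by cell, an asymptotic bound P(Z > v) <= c P(W > v) for v >= M gives

       P(Y + Z > u) <= c P(Y + W > u) + P(Y > u - M)             (all u),

   while trivially P(Y + W > u) >= P(Y > u - M - a) P(W > M + a).  Condition
   (P) says P(Y > u - M) = o(P(Y > u - M - a)), so the error term is
   o(P(Y + W > u)) and the bound transfers: eventually
   P(Y + Z > u) < (c + eta) P(Y + W > u).  Applying this with the roles of Z
   and W exchanged gives the ratio limit 1; applying it with c small gives 0. *)

From Stdlib Require Import Reals ZArith Lra Lia Psatz Classical FunctionalExtensionality PropExtensionality.
Open Scope R_scope.

Lemma pred_ext {T : Type} (A B : T -> Prop) : (forall x, A x <-> B x) -> A = B.
Proof.
  intros H; apply functional_extensionality; intro x.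
  apply propositional_extensionality; auto.
Qed.

Section SigmaAlgebra.
Context {T : Type} (S : (T -> Prop) -> Prop).
Hypothesis HS : is_sigma_algebra S.

Lemma sa_ext (A B : T -> Prop) : (forall x, A x <-> B x) -> S A -> S B.
Proof. intros H; rewrite (pred_ext A B H); auto. Qed.

Lemma sa_full : S (fun _ => True).
Proof. exact (proj1 HS). Qed.

Lemma sa_compl A : S A -> S (fun x => ~ A x).
Proof. exact (proj1 (proj2 HS) A). Qed.

Lemma sa_union (A : nat -> T -> Prop) :
  (forall n, S (A n)) -> S (fun x => exists n, A n x).
Proof. exact (proj2 (proj2 HS) A). Qed.

Lemma sa_empty : S (fun _ => False).
Proof. apply (sa_ext (fun _ => ~ True)); [tauto | apply sa_compl, sa_full]. Qed.

Lemma sa_or A B : S A -> S B -> S (fun x => A x \/ B x).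
Proof.
  intros HA HB.
  apply (sa_ext (fun x => exists n : nat, (if n then A else B) x)).
  - intros x; split; [intros [[|n] h]; auto | intros [h|h]; [exists O | exists 1%nat]; exact h].
  - apply sa_union; intros [|n]; auto.
Qed.

Lemma sa_and A B : S A -> S B -> S (fun x => A x /\ B x).
Proof.
  intros HA HB. apply (sa_ext (fun x => ~ (~ A x \/ ~ B x))); [intros; tauto |].
  apply sa_compl, sa_or; apply sa_compl; auto.
Qed.

Lemma sa_inter (A : nat -> T -> Prop) :
  (forall n, S (A n)) -> S (fun x => forall n, A n x).
Proof.
  intros HA. apply (sa_ext (fun x => ~ exists n, ~ A n x)).
  - intros x; split; [intros h n; apply NNPP; eauto | intros h [n hn]; auto].
  - apply sa_compl, sa_union; intros; apply sa_compl; auto.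
Qed.

End SigmaAlgebra.

Lemma borel_sigma : is_sigma_algebra borel.
Proof.
  split; [| split].
  - intros S HS _; apply sa_full; auto.
  - intros A HA S HS Hi; apply sa_compl, HA; auto.
  - intros A HA S HS Hi; apply sa_union; auto; intros n; apply HA; auto.
Qed.

Lemma borel_gt c : borel (fun x => x > c).
Proof.
  apply (sa_ext borel (fun x => exists n, c < x < c + INR n + 1)).
  - intros x; split; [intros [n Hn]; lra |].
    intros Hx; destruct (INR_unbounded (x - c)) as [n Hn]; exists n; lra.
  - apply sa_union; [apply borel_sigma |]. intros n S _ Hi; apply Hi.
Qed.

Lemma borel_lt c : borel (fun x => x < c).
Proof.
  apply (sa_ext borel (fun x => exists n, c - INR n - 1 < x < c)).
  - intros x; split; [intros [n Hn]; lra |].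
    intros Hx; destruct (INR_unbounded (c - x)) as [n Hn]; exists n; lra.
  - apply sa_union; [apply borel_sigma |]. intros n S _ Hi; apply Hi.
Qed.

Lemma borel_Ico a b : borel (fun x => a <= x < b).
Proof.
  apply (sa_ext borel (fun x => ~ x < a /\ x < b)); [intros; lra |].
  apply sa_and; [apply borel_sigma | apply sa_compl, borel_lt | apply borel_lt].
  apply borel_sigma.
Qed.

Section Probability.
Variable Ps : prob_space.

Let ev := event_sigma Ps.

(* The empty event has probability 0: otherwise the constant series would
   diverge. *)
Lemma Pr_empty : Pr Ps (fun _ => False) = 0.
Proof.
  set (p := Pr Ps (fun _ => False)).
  pose proof (Pr_sigma_additive Ps (fun _ _ => False)
    (fun _ => sa_empty _ ev) (fun _ _ _ _ f _ => f)) as H.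
  cbv beta in H.
  replace (fun w : Omega Ps => exists _ : nat, False) with (fun _ : Omega Ps => False) in H
    by (apply pred_ext; firstorder).
  fold p in H.
  assert (Hp : 0 <= p) by apply Pr_nonneg, sa_empty, ev.
  destruct (Rle_lt_or_eq_dec _ _ Hp) as [Hlt | Heq]; [exfalso | auto].
  destruct (H p Hlt) as [N HN]. specialize (HN (S N) (Nat.le_succ_diag_r N)).
  assert (Hsum : forall n, sum_f_R0 (fun _ => p) n = (INR n + 1) * p).
  { induction n as [|n IH]; simpl sum_f_R0; [simpl; ring | rewrite IH, S_INR; ring]. }
  unfold Rdist in HN. rewrite Hsum, S_INR in HN. pose proof (pos_INR N).
  rewrite Rabs_right in HN; nra.
Qed.

Lemma Pr_add (A B : Omega Ps -> Prop) :
  event Ps A -> event Ps B -> (forall w, A w -> B w -> False) ->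
  Pr Ps (fun w => A w \/ B w) = Pr Ps A + Pr Ps B.
Proof.
  intros HA HB Hd.
  set (C := fun n : nat => match n with O => A | 1%nat => B | _ => fun _ => False end).
  assert (HC : forall n, event Ps (C n)) by (intros [|[|n]]; simpl; auto; apply sa_empty, ev).
  assert (Hdisj : forall m n, m <> n -> forall w, C m w -> C n w -> False).
  { intros [|[|m]] [|[|n]] hmn w; simpl; try tauto; try lia; eauto. }
  pose proof (Pr_sigma_additive Ps C HC Hdisj) as H.
  replace (fun w => exists n, C n w) with (fun w => A w \/ B w) in H.
  2:{ apply pred_ext; intros w; split.
      - intros [h|h]; [exists O | exists 1%nat]; exact h.
      - intros [[|[|n]] h]; simpl in h; tauto. }
  apply (uniqueness_sum _ _ _ H).
  intros eps Heps. exists 1%nat. intros [|n] Hn; [lia |].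
  replace (sum_f_R0 (fun n => Pr Ps (C n)) (S n)) with (Pr Ps A + Pr Ps B).
  - unfold Rdist; rewrite Rminus_diag, Rabs_R0; auto.
  - clear Hn. induction n as [|n IH]; [simpl; ring |].
    simpl sum_f_R0 in *. rewrite <- IH. simpl. rewrite Pr_empty; ring.
Qed.

Lemma Pr_mono (A B : Omega Ps -> Prop) :
  event Ps A -> event Ps B -> (forall w, A w -> B w) -> Pr Ps A <= Pr Ps B.
Proof.
  intros HA HB Hs.
  assert (HBA : event Ps (fun w => B w /\ ~ A w)) by (apply sa_and, sa_compl; auto).
  replace B with (fun w => A w \/ (B w /\ ~ A w)).
  2:{ apply pred_ext; intros w; split; [firstorder |]. intros h; destruct (classic (A w)); tauto. }
  rewrite Pr_add; auto; [| tauto]. pose proof (Pr_nonneg Ps _ HBA); lra.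
Qed.

Lemma Pr_le1 A : event Ps A -> Pr Ps A <= 1.
Proof. intros HA. rewrite <- (Pr_full Ps). apply Pr_mono; auto. apply sa_full, ev. Qed.

Lemma Pr_increasing_union (E : nat -> Omega Ps -> Prop) :
  (forall n, event Ps (E n)) -> (forall n w, E n w -> E (S n) w) ->
  Un_cv (fun n => Pr Ps (E n)) (Pr Ps (fun w => exists n, E n w)).
Proof.
  intros HE Hinc.
  assert (Hmono : forall m k w, (m <= k)%nat -> E m w -> E k w)
    by (intros m k w hk; induction hk; auto).
  set (D := fun n => match n with O => E O | S m => fun w => E (S m) w /\ ~ E m w end).
  assert (HD : forall n, event Ps (D n)) by (intros [|n]; simpl; auto; apply sa_and, sa_compl; auto).
  assert (Hdisj : forall m n, m <> n -> forall w, D m w -> D n w -> False).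
  { assert (Hlt : forall m n w, (m < n)%nat -> D m w -> D n w -> False).
    { intros m [|n] w hlt h1 h2; [lia |]. destruct h2 as [_ h2].
      apply h2, (Hmono m); [lia |]. destruct m; simpl in h1; tauto. }
    intros m n hmn w h1 h2. destruct (Nat.lt_total m n) as [h|[h|h]]; eauto. }
  assert (Hunion : (fun w => exists n, D n w) = (fun w => exists n, E n w)).
  { apply pred_ext; intros w; split.
    - intros [[|n] h]; simpl in h; [exists O | exists (S n)]; tauto.
    - intros [n h]. induction n as [|n IH]; [exists O; exact h |].
      destruct (classic (E n w)); auto. exists (S n); simpl; tauto. }
  assert (Hpartial : forall n, sum_f_R0 (fun k => Pr Ps (D k)) n = Pr Ps (E n)).
  { induction n as [|n IH]; [reflexivity |]. simpl sum_f_R0. rewrite IH, <- Pr_add; auto.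
    - f_equal. apply pred_ext; intros w; split.
      + intros [h|[h _]]; auto.
      + intros h; destruct (classic (E n w)); tauto.
    - apply (HD (S n)).
    - simpl; tauto. }
  pose proof (Pr_sigma_additive Ps D HD Hdisj) as H. rewrite Hunion in H.
  intros eps Heps. destruct (H eps Heps) as [N HN]. exists N. intros n hn.
  rewrite <- Hpartial. auto.
Qed.

End Probability.

Lemma Un_cv_const c : Un_cv (fun _ => c) c.
Proof. intros eps Heps; exists O; intros; unfold Rdist; rewrite Rminus_diag, Rabs_R0; auto. Qed.

Lemma infinite_sum_le (a b d : nat -> R) A B D c :
  infinite_sum a A -> infinite_sum b B -> infinite_sum d D ->
  (forall j, a j <= c * b j + d j) -> A <= c * B + D.
Proof.
  intros Ha Hb Hd Hj.
  apply (Rle_cv_lim (Un := sum_f_R0 a) (Vn := fun n => c * sum_f_R0 b n + sum_f_R0 d n)); auto.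
  - induction n as [|n IH]; simpl; [auto | specialize (Hj (S n)); lra].
  - apply CV_plus; auto. apply CV_mult; auto. apply Un_cv_const.
Qed.

Lemma nat_floor t d : 0 <= t -> 0 < d -> exists j : nat, INR j * d <= t < INR j * d + d.
Proof.
  intros Ht Hd. set (r := t / d).
  assert (Hr : 0 <= r) by (unfold r; apply Rmult_le_pos; [lra | apply Rlt_le, Rinv_0_lt_compat; lra]).
  destruct (base_Int_part r) as [h1 h2].
  assert (Hk : (0 <= Int_part r)%Z).
  { assert (-1 < Int_part r)%Z by (apply lt_IZR; lra). lia. }
  exists (Z.to_nat (Int_part r)). rewrite INR_IZR_INZ, Z2Nat.id by exact Hk.
  assert (t = r * d) by (unfold r; field; lra). split; nra.
Qed.

Definition eventually_large (P : R -> Prop) : Prop := exists M, forall u, u >= M -> P u.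

Lemma eventually_and (P Q : R -> Prop) :
  eventually_large P -> eventually_large Q -> eventually_large (fun u => P u /\ Q u).
Proof.
  intros [M HM] [N HN]. exists (Rmax M N). intros u hu.
  pose proof (Rmax_l M N); pose proof (Rmax_r M N). split; [apply HM | apply HN]; lra.
Qed.

Lemma eventually_impl (P Q : R -> Prop) :
  eventually_large P -> (forall u, P u -> Q u) -> eventually_large Q.
Proof. intros [M HM] H. exists M; auto. Qed.

Lemma lt_div_iff a F G : 0 < G -> (a < F / G <-> a * G < F).
Proof.
  intros HG. replace F with (F / G * G) at 2 by (field; lra).
  split; intros h; [apply Rmult_lt_compat_r | apply (Rmult_lt_reg_r G)]; auto.
Qed.

Lemma div_lt_iff F G b : 0 < G -> (F / G < b <-> F < b * G).
Proof.
  intros HG. replace F with (F / G * G) at 2 by (field; lra).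
  split; intros h; [apply Rmult_lt_compat_r | apply (Rmult_lt_reg_r G)]; auto.
Qed.

Lemma ratio_close (f g : R -> R) L :
  (forall u, u > 0 -> g u > 0) -> lim_infty (fun u => f u / g u) L ->
  forall e, e > 0 -> eventually_large (fun u => (L - e) * g u < f u < (L + e) * g u).
Proof.
  intros Hg Hlim e He. destruct (Hlim e He) as [M HM].
  exists (Rmax M 1). intros u hu. pose proof (Rmax_l M 1); pose proof (Rmax_r M 1).
  assert (Hgu : 0 < g u) by (apply Hg; lra).
  destruct (Rabs_def2 _ _ (HM u ltac:(lra))) as [h1 h2].
  rewrite <- lt_div_iff, <- div_lt_iff by exact Hgu. lra.
Qed.

Lemma lim_of_ratio_close (f g : R -> R) L :
  (forall e, e > 0 -> eventually_large (fun u => 0 < g u /\ (L - e) * g u < f u < (L + e) * g u)) ->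
  lim_infty (fun u => f u / g u) L.
Proof.
  intros H e He. destruct (H e He) as [M HM]. exists M. intros u hu.
  destruct (HM u hu) as [Hgu [h1 h2]].
  rewrite <- lt_div_iff in h1 by exact Hgu. rewrite <- div_lt_iff in h2 by exact Hgu.
  apply Rabs_def1; lra.
Qed.

Definition mesh (n : nat) : R := / (INR n + 1).
Definition grid (n j : nat) : R := - INR n + INR j * mesh n.
Definition cell (n j : nat) (t : R) : Prop := grid n j <= t < grid n j + mesh n.

Lemma mesh_pos n : 0 < mesh n.
Proof. unfold mesh. apply Rinv_0_lt_compat. pose proof (pos_INR n); lra. Qed.

Lemma cell_unique n j k t : cell n j t -> cell n k t -> j = k.
Proof.
  unfold cell, grid. intros h1 h2. pose proof (mesh_pos n).
  destruct (Nat.lt_total j k) as [h|[h|h]]; auto; exfalso;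
    apply le_INR in h; rewrite S_INR in h; nra.
Qed.

Lemma cell_exists n t : - INR n <= t -> exists j, cell n j t.
Proof.
  intros Ht. destruct (nat_floor (t + INR n) (mesh n)) as [j Hj]; [lra | apply mesh_pos |].
  exists j. unfold cell, grid. lra.
Qed.

Lemma rv_gt_event (Ps : prob_space) (X : Omega Ps -> R) c :
  random_variable X -> event Ps (fun w => X w > c).
Proof. intros rv. exact (rv _ (borel_gt c)). Qed.

Lemma rv_cell_event (Ps : prob_space) (X : Omega Ps -> R) n j :
  random_variable X -> event Ps (fun w => cell n j (X w)).
Proof. intros rv. exact (rv _ (borel_Ico _ _)). Qed.

Lemma tail_nonneg (Ps : prob_space) (X : Omega Ps -> R) c : random_variable X -> 0 <= tail X c.
Proof. intros; apply Pr_nonneg, rv_gt_event; auto. Qed.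

Lemma tail_le1 (Ps : prob_space) (X : Omega Ps -> R) c : random_variable X -> tail X c <= 1.
Proof. intros; apply Pr_le1, rv_gt_event; auto. Qed.

(** The event [approx Y X u n] (Y in some
    cell j and X > u - grid n j) is contained in {Y + X > u}, its
    probability is a series by independence, and these events eventually
    contain every point of {Y + X > u}. *)
Section Discretisation.
Variables (Ps : prob_space) (Y : Omega Ps -> R).
Hypothesis rvY : random_variable Y.

Let ev := event_sigma Ps.

Definition approx (X : Omega Ps -> R) (u : R) (n : nat) : Omega Ps -> Prop :=
  fun w => exists j, cell n j (Y w) /\ X w > u - grid n j.

Lemma cells_series n (B : nat -> Omega Ps -> Prop) :
  (forall j, event Ps (B j)) ->
  infinite_sum (fun j => Pr Ps (fun w => cell n j (Y w) /\ B j w))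
               (Pr Ps (fun w => exists j, cell n j (Y w) /\ B j w)).
Proof.
  intros HB. apply (Pr_sigma_additive Ps (fun j w => cell n j (Y w) /\ B j w)).
  - intros j. apply sa_and; auto. apply rv_cell_event; auto.
  - intros m k hmk w [h1 _] [h2 _]. exact (hmk (cell_unique _ _ _ _ h1 h2)).
Qed.

Lemma cells_event n (B : nat -> Omega Ps -> Prop) :
  (forall j, event Ps (B j)) -> event Ps (fun w => exists j, cell n j (Y w) /\ B j w).
Proof.
  intros HB. apply (sa_union _ ev (fun j w => cell n j (Y w) /\ B j w)).
  intros j. apply sa_and; auto. apply rv_cell_event; auto.
Qed.

Section Approximation.
Variables (X : Omega Ps -> R) (u : R).
Hypothesis rvX : random_variable X.

Lemma approx_event n : event Ps (approx X u n).
Proof. apply cells_event. intros j; apply rv_gt_event; auto. Qed.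

Lemma approx_series n : independent Y X ->
  infinite_sum (fun j => Pr Ps (fun w => cell n j (Y w)) * tail X (u - grid n j))
               (Pr Ps (approx X u n)).
Proof.
  intros ind.
  replace (fun j => Pr Ps (fun w => cell n j (Y w)) * tail X (u - grid n j))
    with (fun j => Pr Ps (fun w => cell n j (Y w) /\ X w > u - grid n j)).
  - apply cells_series. intros j; apply rv_gt_event; auto.
  - apply functional_extensionality; intros j.
    exact (ind (cell n j) (fun t => t > u - grid n j) (borel_Ico _ _) (borel_gt _)).
Qed.

Lemma approx_sub n w : approx X u n w -> Y w + X w > u.
Proof. intros [j [[h1 h2] h3]]. lra. Qed.

(* Conversely, once the mesh is below the gap Y + X - u and the grid reaches
   down to Y, the point lies in every further approximating set. *)
Lemma approx_eventually w : Y w + X w > u -> exists N, forall n, approx X u (N + n) w.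
Proof.
  intros Hg. set (g := Y w + X w - u).
  destruct (INR_unbounded (- Y w)) as [N1 H1].
  destruct (INR_unbounded (/ g)) as [N2 H2].
  exists (N1 + N2)%nat. intros n. set (m := (N1 + N2 + n)%nat).
  assert (Hm1 : INR N1 <= INR m) by (apply le_INR; unfold m; lia).
  assert (Hm2 : INR N2 <= INR m) by (apply le_INR; unfold m; lia).
  assert (Hmesh : mesh m < g).
  { unfold mesh. rewrite <- (Rinv_inv g). apply Rinv_lt_contravar; [| lra].
    apply Rmult_lt_0_compat; [apply Rinv_0_lt_compat; unfold g |]; pose proof (pos_INR m); lra. }
  destruct (cell_exists m (Y w)) as [j Hj]; [lra |].
  exists j. split; auto. unfold cell, g in *. lra.
Qed.

Let tail_approx (N : nat) : Omega Ps -> Prop := fun w => forall n, approx X u (N + n) w.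

Let tail_approx_event N : event Ps (tail_approx N).
Proof. apply (sa_inter _ ev (fun n => approx X u (N + n))). intros; apply approx_event. Qed.

Let tail_approx_union : (fun w => exists N, tail_approx N w) = (fun w => Y w + X w > u).
Proof.
  apply pred_ext; intros w; split.
  - intros [N h]. exact (approx_sub _ _ (h O)).
  - apply approx_eventually.
Qed.

Lemma sum_gt_event : event Ps (fun w => Y w + X w > u).
Proof. rewrite <- tail_approx_union. apply sa_union; auto. Qed.

Lemma tail_sum_le K : (forall n, Pr Ps (approx X u n) <= K) -> tail (fun w => Y w + X w) u <= K.
Proof.
  intros HK. unfold tail. rewrite <- tail_approx_union.
  apply (Rle_cv_lim (Un := fun N => Pr Ps (tail_approx N)) (Vn := fun _ => K)); [| | apply Un_cv_const].
  2:{ apply Pr_increasing_union; auto. intros N w h n.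
      rewrite Nat.add_succ_l, <- Nat.add_succ_r. exact (h (S n)). }
  intros N. eapply Rle_trans; [| apply (HK N)]. apply Pr_mono; auto using approx_event.
  intros w h. rewrite <- (Nat.add_0_r N). apply h.
Qed.

End Approximation.
End Discretisation.

Section Comparison.
Variables (Ps : prob_space) (Y Z W : Omega Ps -> R).
Hypotheses (rvY : random_variable Y) (rvZ : random_variable Z) (rvW : random_variable W).
Hypotheses (indYZ : independent Y Z) (indYW : independent Y W).

(* Cellwise version of the comparison: on cells lying beyond u - M the
   hypothesis tail Z <= c tail W applies, otherwise the whole cell lies in
   {Y > u - M}. *)
Lemma cell_term_compare c M u n j :
  0 <= c -> (forall v, v >= M -> tail Z v <= c * tail W v) ->
  Pr Ps (fun w => cell n j (Y w)) * tail Z (u - grid n j) <=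
  c * (Pr Ps (fun w => cell n j (Y w)) * tail W (u - grid n j)) +
  Pr Ps (fun w => cell n j (Y w) /\ Y w > u - M).
Proof.
  intros Hc HM.
  set (p := Pr Ps (fun w => cell n j (Y w))).
  assert (Hp : 0 <= p) by (apply Pr_nonneg, rv_cell_event; auto).
  pose proof (tail_nonneg Ps W (u - grid n j) rvW) as HW0.
  pose proof (tail_le1 Ps Z (u - grid n j) rvZ) as HZ1.
  destruct (Rle_or_lt M (u - grid n j)) as [h|h].
  - assert (0 <= Pr Ps (fun w => cell n j (Y w) /\ Y w > u - M)).
    { apply Pr_nonneg, sa_and; [apply event_sigma | apply rv_cell_event | apply rv_gt_event]; auto. }
    specialize (HM _ (Rle_ge _ _ h)).
    pose proof (Rmult_le_compat_l p _ _ Hp HM). lra.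
  - replace (fun w => cell n j (Y w) /\ Y w > u - M) with (fun w => cell n j (Y w)).
    + fold p. pose proof (Rmult_le_compat_l p _ _ Hp HZ1).
      assert (0 <= c * (p * tail W (u - grid n j))) by (apply Rmult_le_pos; [| apply Rmult_le_pos]; auto).
      lra.
    + apply pred_ext; intros w; split; [| tauto]. intros hc; split; auto. destruct hc; lra.
Qed.

Lemma tail_sum_compare c M :
  0 <= c -> (forall v, v >= M -> tail Z v <= c * tail W v) ->
  forall u, tail (fun w => Y w + Z w) u <= c * tail (fun w => Y w + W w) u + tail Y (u - M).
Proof.
  intros Hc HM u. apply (tail_sum_le Ps Y rvY Z u rvZ). intros n.
  set (D := fun w => exists j, cell n j (Y w) /\ Y w > u - M).
  assert (HD : infinite_sum (fun j => Pr Ps (fun w => cell n j (Y w) /\ Y w > u - M)) (Pr Ps D))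
    by (apply cells_series; auto; intros; apply rv_gt_event; auto).
  assert (Happrox : Pr Ps (approx Ps Y Z u n) <= c * Pr Ps (approx Ps Y W u n) + Pr Ps D).
  { apply (infinite_sum_le _ _ _ _ _ _ c (approx_series Ps Y rvY Z u rvZ n indYZ)
             (approx_series Ps Y rvY W u rvW n indYW) HD).
    intros j; apply cell_term_compare; auto. }
  assert (HW : Pr Ps (approx Ps Y W u n) <= tail (fun w => Y w + W w) u).
  { apply Pr_mono; auto using approx_event, sum_gt_event. apply approx_sub. }
  assert (HY : Pr Ps D <= tail Y (u - M)).
  { apply Pr_mono; [apply cells_event | apply rv_gt_event |]; auto.
    - intros; apply rv_gt_event; auto.
    - intros w [j [_ h]]; exact h. }
  pose proof (Rmult_le_compat_l c _ _ Hc HW). lra.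
Qed.

Lemma tail_sum_lower c0 u : tail Y (u - c0) * tail W c0 <= tail (fun w => Y w + W w) u.
Proof.
  unfold tail. rewrite <- (indYW (fun t => t > u - c0) (fun t => t > c0) (borel_gt _) (borel_gt _)).
  apply Pr_mono; auto using sum_gt_event.
  - apply sa_and; [apply event_sigma | apply rv_gt_event | apply rv_gt_event]; auto.
  - intros w [h1 h2]; lra.
Qed.

(* Under condition (P) on Y, the error term P(Y > u - M) is negligible against
   the lower bound, so an asymptotic bound tail Z <= c tail W yields
   tail (Y + Z) <= (c + eta) tail (Y + W) for large u. *)
Lemma tail_sum_ratio_upper c :
  (forall u, u > 0 -> tail W u > 0) -> condP Y -> 0 <= c ->
  eventually_large (fun v => tail Z v <= c * tail W v) ->
  forall eta, eta > 0 -> eventually_large (fun u =>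
    0 < tail (fun w => Y w + W w) u /\
    tail (fun w => Y w + Z w) u < (c + eta) * tail (fun w => Y w + W w) u).
Proof.
  intros hW [hYpos [a [Ha Hlim]]] Hc [M0 HM0] eta Heta.
  set (M := Rmax M0 0).
  assert (HM : forall v, v >= M -> tail Z v <= c * tail W v)
    by (intros v hv; apply HM0; unfold M in hv; pose proof (Rmax_l M0 0); lra).
  assert (HM_nonneg : 0 <= M) by apply Rmax_r.
  (* Fix the shift c0 = M + a, and compare u - M = (u - c0) + a with u - c0. *)
  set (c0 := M + a). set (p := tail W c0).
  assert (Hp : p > 0) by (apply hW; unfold c0; lra).
  destruct (Hlim (eta * p) ltac:(apply Rmult_lt_0_compat; lra)) as [U0 HU0].
  exists (Rmax U0 1 + c0). intros u Hu.
  pose proof (Rmax_l U0 1). pose proof (Rmax_r U0 1).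
  set (v := u - c0).
  assert (HvY : tail Y v > 0) by (apply hYpos; unfold v; lra).
  specialize (HU0 v ltac:(unfold v; lra)). cbv beta in HU0.
  replace (v + a) with (u - M) in HU0 by (unfold v, c0; ring).
  rewrite Rminus_0_r in HU0. apply Rabs_def2 in HU0. destruct HU0 as [HU0 _].
  rewrite div_lt_iff in HU0 by lra.
  pose proof (tail_sum_lower c0 u) as Hlow. fold v p in Hlow.
  pose proof (tail_sum_compare c M Hc HM u) as Hcomp.
  split; nra.
Qed.

End Comparison.

Section RatioLimits.
Variables (Ps : prob_space) (Y Z W : Omega Ps -> R).
Hypotheses (rvY : random_variable Y) (rvZ : random_variable Z) (rvW : random_variable W).
Hypotheses (hZ : forall u, u > 0 -> tail Z u > 0) (hW : forall u, u > 0 -> tail W u > 0).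
Hypotheses (indYZ : independent Y Z) (indYW : independent Y W) (hY : condP Y).

(* Tail equivalence Z ~ W transfers to Y + Z ~ Y + W: for small d, both
   Z <= (1 + d) W and W <= (1 + 2d) Z hold eventually, and each bound is
   transferred with an error d. *)
Lemma tail_sum_ratio_one :
  lim_infty (fun u => tail Z u / tail W u) 1 ->
  lim_infty (fun u => tail (fun w => Y w + Z w) u / tail (fun w => Y w + W w) u) 1.
Proof.
  intros Hlim. apply lim_of_ratio_close. intros e He.
  set (d := Rmin (e / 3) (1 / 2)).
  assert (Hd : 0 < d) by (apply Rmin_glb_lt; lra).
  assert (Hd3 : d <= e / 3) by apply Rmin_l.
  assert (Hd2 : d <= 1 / 2) by apply Rmin_r.
  pose proof (ratio_close _ _ _ hW Hlim d Hd) as Hclose.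
  assert (HWpos : eventually_large (fun v => tail W v > 0)) by (exists 1; intros; apply hW; lra).
  assert (HZW : eventually_large (fun v => tail Z v <= (1 + d) * tail W v)).
  { apply (eventually_impl _ _ Hclose). intros v [_ h]; lra. }
  assert (HWZ : eventually_large (fun v => tail W v <= (1 + 2 * d) * tail Z v)).
  { apply (eventually_impl _ _ (eventually_and _ _ Hclose HWpos)). intros v [[h _] hv].
    assert (0 <= d * (1 - 2 * d) * tail W v) by (apply Rmult_le_pos; [apply Rmult_le_pos |]; lra).
    pose proof (Rmult_lt_compat_l (1 + 2 * d) _ _ ltac:(lra) h). nra. }
  pose proof (tail_sum_ratio_upper Ps Y Z W rvY rvZ rvW indYZ indYW
                (1 + d) hW hY ltac:(lra) HZW d Hd) as Hupper.
  pose proof (tail_sum_ratio_upper Ps Y W Z rvY rvW rvZ indYW indYZ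
                (1 + 2 * d) hZ hY ltac:(lra) HWZ d Hd) as Hlower.
  apply (eventually_impl _ _ (eventually_and _ _ Hupper Hlower)).
  intros u [[HG HF] [_ HG']].
  set (F := tail (fun w => Y w + Z w) u) in *. set (G := tail (fun w => Y w + W w) u) in *.
  assert (HF3 : (1 - 3 * d) * G < F).
  { apply (Rmult_lt_reg_l (1 + 3 * d)); [lra |].
    assert (0 <= d * d * G) by (apply Rmult_le_pos; [apply Rmult_le_pos |]; lra). nra. }
  repeat split; nra.
Qed.

Lemma tail_sum_ratio_zero :
  lim_infty (fun u => tail Z u / tail W u) 0 ->
  lim_infty (fun u => tail (fun w => Y w + Z w) u / tail (fun w => Y w + W w) u) 0.
Proof.
  intros Hlim. apply lim_of_ratio_close. intros e He.
  assert (HZW : eventually_large (fun v => tail Z v <= e / 2 * tail W v)).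
  { apply (eventually_impl _ _ (ratio_close _ _ _ hW Hlim (e / 2) ltac:(lra))).
    intros v [_ h]; lra. }
  pose proof (tail_sum_ratio_upper Ps Y Z W rvY rvZ rvW indYZ indYW
                (e / 2) hW hY ltac:(lra) HZW (e / 2) ltac:(lra)) as Hupper.
  apply (eventually_impl _ _ Hupper). intros u [HG HF].
  pose proof (Pr_nonneg Ps _ (sum_gt_event Ps Y rvY Z u rvZ)).
  unfold tail in *. repeat split; nra.
Qed.

End RatioLimits.

Theorem lemma1 (Ps : prob_space) (Y Z W : Omega Ps -> R)
  (rvY : random_variable Y) (rvZ : random_variable Z) (rvW : random_variable W)
  (hZ : forall u, u > 0 -> tail Z u > 0)
  (hW : forall u, u > 0 -> tail W u > 0)
  (indYZ : independent Y Z) (indYW : independent Y W)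
  (hY : condP Y) :
  (lim_infty (fun u => tail Z u / tail W u) 1 ->
   lim_infty (fun u => tail (fun w => Y w + Z w) u / tail (fun w => Y w + W w) u) 1) /\
  (lim_infty (fun u => tail Z u / tail W u) 0 ->
   lim_infty (fun u => tail (fun w => Y w + Z w) u / tail (fun w => Y w + W w) u) 0).
Proof.
  split.
  - apply tail_sum_ratio_one; auto.
  - apply tail_sum_ratio_zero; auto.
Qed.
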